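(* Let $p$ be a prime and $k>1$ an integer, and let $t$ be a nonnegative integer with $t\le\min\{\log((k-1)/2),\ \log(p/2)\}$. Then for any distinct $g_0,g_1\in\mathbb{Z}_p$, there is no deterministic one-round $k$-party protocol for the Sum-Distinguish problem over $\mathbb{Z}_p$ relative to $g_0,g_1$ with per-party communication complexity $t$.
   Context: Model: parties $P_1,\dots,P_k$ each hold an input $x_i\in\mathbb{Z}_p$; a coordinator (distinct from the parties) wants to compute $f(x_1,\dots,x_k)$. In a deterministic one-round protocol each party sends a single message, a function of its own input only, to the coordinator, who outputs a value depending only on the received messages; there is no other communication. A protocol has per-party communication complexity $t$ if each party always sends exactly $t$ bits. Sum-Distinguish relative to distinct $g_0,g_1\in\mathbb{Z}_p$: the partial function $f$ with $f=1$ if $\sum_i x_i\equiv g_1\pmod p$ and $f=0$ if $\sum_i x_i\equiv g_0\pmod p$ (undefined otherwise); a protocol solves it if the coordinator outputs the correct value on every input on which $f$ is defined. $\log$ is base 2. *)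

From mathcomp Require Import all_boot all_algebra.
Set Implicit Arguments. Unset Strict Implicit. Unset Printing Implicit Defensive.
Import GRing.Theory.
Local Open Scope ring_scope.

(* A deterministic one-round k-party protocol over 'Z_p with per-party
   communication exactly t bits: party i sends msg i (x i), a t-bit string
   (a t.-tuple bool) depending only on i's own input; the coordinator outputs
   coord applied to the vector of received messages. *)
Record protocol (p k t : nat) := Protocol {
  msg : 'I_k -> 'Z_p -> t.-tuple bool;
  coord : {ffun 'I_k -> t.-tuple bool} -> nat
}.

Definition run (p k t : nat) (P : protocol p k t) (x : 'I_k -> 'Z_p) : nat :=
  coord P [ffun i => msg P i (x i)].

Definition solves_sum_distinguish (p k t : nat) (g0 g1 : 'Z_p)
    (P : protocol p k t) : Prop :=
  forall x : 'I_k -> 'Z_p,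
    ((\sum_(i < k) x i = g1) -> run P x = 1%N) /\
    ((\sum_(i < k) x i = g0) -> run P x = 0%N).

From mathcomp Require Import all_boot all_algebra zify.
Set Implicit Arguments. Unset Strict Implicit. Unset Printing Implicit Defensive.
Import GRing.Theory.
Local Open Scope ring_scope.

(* By pigeonhole each party has a message shared by at least p / 2^t of its
   inputs. Iterating the Cauchy-Davenport inequality over the k >= 2^(t+1) + 1
   parties, the sums of inputs from these fibers cover all of Z_p, so some
   input with sum g0 and some input with sum g1 produce identical transcripts
   and the coordinator cannot tell them apart. *)

Lemma exists_large_fiber (T : finType) (t : nat) (f : T -> t.-tuple bool) :
  exists m, (#|T| <= #|[set z | f z == m]| * 2 ^ t)%N.
Proof.
apply/existsP; apply: contraT => /existsPn small.
have fibers_partition :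
    (\sum_(m : t.-tuple bool) #|[set z | f z == m]| = #|T|)%N.
  rewrite -sum1_card (partition_big f xpredT) //=.
  by apply: eq_bigr => m _; rewrite -sum1_card; apply: eq_bigl => z; rewrite inE.
have : (\sum_(m : t.-tuple bool) (#|[set z | f z == m]| * 2 ^ t + 1)
        <= \sum_(m : t.-tuple bool) #|T|)%N.
  by apply: leq_sum => m _; rewrite addn1 ltnNge small.
rewrite big_split -big_distrl /= fibers_partition !sum_nat_const.
rewrite card_tuple card_bool.
by have := expn_gt0 2 t; move: (2 ^ t)%N #|T| => a b; nia.
Qed.

Section CauchyDavenport.
Variable p : nat.
Hypothesis p_prime : prime p.

Let p_gt1 : (1 < p)%N. Proof. exact: prime_gt1. Qed.

Lemma card_Zp_prime : #|'Z_p| = p.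
Proof. by rewrite card_ord Zp_cast. Qed.

Lemma Zp_unit_neq0 (d : 'Z_p) : d != 0 -> d \is a GRing.unit.
Proof.
move=> d_neq0; rewrite -(natr_Zp d) unitZpE // prime_coprime //.
have d_gt0 : (0 < d)%N.
  by rewrite lt0n; apply: contraNneq d_neq0 => d0; apply/eqP/val_inj.
have d_ltp : (d < p)%N by have := ltn_ord d; rewrite [X in (_ < X)%N]Zp_cast.
by apply/negP => /(dvdn_leq d_gt0); rewrite leqNgt d_ltp.
Qed.

Lemma addr_stable_setT (A : {set 'Z_p}) (a d : 'Z_p) :
  d != 0 -> a \in A -> (forall y, y \in A -> y + d \in A) -> A = setT.
Proof.
move=> d_neq0 aA stable.
have a_plus_multiples n : a + d *+ n \in A.
  elim: n => [|n IH]; first by rewrite mulr0n addr0.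
  by rewrite mulrS addrCA addrC; apply: stable.
apply/setP => z; rewrite inE.
have := a_plus_multiples (val ((z - a) / d)).
by rewrite -mulr_natr natr_Zp mulrC divrK ?Zp_unit_neq0 // addrC subrK.
Qed.

Definition sumset (A B : {set 'Z_p}) : {set 'Z_p} := [set x + y | x in A, y in B].

Lemma card_shift (A : {set 'Z_p}) e : #|[set x + e | x in A]| = #|A|.
Proof. by rewrite card_imset //; apply: addIr. Qed.

Lemma leq_card_sumset (A B : {set 'Z_p}) b : b \in B -> (#|A| <= #|sumset A B|)%N.
Proof.
move=> bB; rewrite -(card_shift A b); apply/subset_leq_card/subsetP.
by move=> _ /imsetP[x xA ->]; apply: imset2_f.
Qed.

(* Dyson's e-transform of (A, B). *)
Section ETransform.
Variables (A B : {set 'Z_p}) (e : 'Z_p).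

Definition etrans_l : {set 'Z_p} := A :|: [set y + e | y in B].
Definition etrans_r : {set 'Z_p} := [set y in B | y + e \in A].

Lemma card_etrans : (#|etrans_l| + #|etrans_r| = #|A| + #|B|)%N.
Proof.
have meet : A :&: [set y + e | y in B] = [set y + e | y in etrans_r].
  apply/setP => z; apply/idP/idP.
    rewrite inE => /andP[zA /imsetP[y yB zE]]; apply/imsetP; exists y => //.
    by rewrite inE yB -zE zA.
  by move=> /imsetP[y]; rewrite inE => /andP[yB yeA] ->; rewrite inE yeA; apply: imset_f.
by rewrite -(card_shift etrans_r e) -meet cardsUI card_shift.
Qed.

Lemma sumset_etrans_sub : sumset etrans_l etrans_r \subset sumset A B.
Proof.
apply/subsetP => z /imset2P[u v uA']; rewrite inE => /andP[vB veA] ->.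
move: uA'; rewrite in_setU => /orP[uA | /imsetP[y yB ->]]; first exact: imset2_f.
by rewrite addrAC -addrA addrC; apply: imset2_f.
Qed.

End ETransform.

(* When A is not all of Z_p, some e = a - b0 with a + (b - b0) outside A
   shrinks B strictly while keeping b0. *)
Lemma exists_etrans_proper (A B : {set 'Z_p}) b0 :
  A != set0 -> A != setT -> b0 \in B -> (1 < #|B|)%N ->
  exists e, b0 \in etrans_r A B e /\ etrans_r A B e \proper B.
Proof.
move=> A_neq0 A_neqT b0B /card_gt1P[x [y [xB yB x_neq_y]]].
have [b1 b1B b1_neq_b0] : exists2 b1, b1 \in B & b1 != b0.
  by case: (eqVneq x b0) => [<-|]; [exists y; rewrite // eq_sym | exists x].
have /exists_inP[a aA /exists_inP[b bB ab_notinA]] :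
    [exists a in A, exists b in B, a + (b - b0) \notin A].
  apply: contraNT A_neqT => /exists_inPn stable.
  case/set0Pn: A_neq0 => a aA; apply/eqP.
  apply: (@addr_stable_setT _ a (b1 - b0) _ aA); first by rewrite subr_eq0.
  by move=> z zA; have /exists_inPn/(_ b1 b1B)/negPn := stable z zA.
exists (a - b0); split; first by rewrite inE b0B addrC subrK.
apply/properP; split; first by apply/subsetP => z; rewrite inE => /andP[].
by exists b => //; rewrite inE bB addrCA.
Qed.

Theorem cauchy_davenport (A B : {set 'Z_p}) : A != set0 -> B != set0 ->
  (minn p (#|A| + #|B| - 1) <= #|sumset A B|)%N.
Proof.
move: {2}#|B| (leqnn #|B|) => n; elim: n => [|n IH] in A B *.
  by rewrite leqn0 cards_eq0 => /eqP -> _; rewrite eqxx.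
move=> B_le A_neq0 /set0Pn[b0 b0B].
have [B_le1 | B_gt1] := leqP #|B| 1.
  by apply: leq_trans (geq_minr _ _) _; apply: leq_trans (leq_card_sumset A b0B); lia.
have [A_eqT | A_neqT] := eqVneq A setT.
  apply: leq_trans (geq_minl _ _) _.
  by rewrite -{1}card_Zp_prime -cardsT -A_eqT; apply: leq_card_sumset b0B.
have [e [b0B' B'_proper]] := exists_etrans_proper A_neq0 A_neqT b0B B_gt1.
have A'_neq0 : etrans_l A B e != set0.
  by case/set0Pn: A_neq0 => x xA; apply/set0Pn; exists x; rewrite inE xA.
have B'_neq0 : etrans_r A B e != set0 by apply/set0Pn; exists b0.
have B'_le : (#|etrans_r A B e| <= n)%N.
  by rewrite -ltnS; apply: leq_trans (proper_card B'_proper) B_le.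
have := IH _ _ B'_le A'_neq0 B'_neq0; rewrite card_etrans => /leq_trans; apply.
exact/subset_leq_card/sumset_etrans_sub.
Qed.

Definition sumset_family n (C : 'I_n -> {set 'Z_p}) : {set 'Z_p} :=
  [set z | [exists x : {ffun 'I_n -> 'Z_p},
              [forall i, x i \in C i] && (z == \sum_i x i)]].

Lemma sumset_family_recl n (C : 'I_n.+1 -> {set 'Z_p}) :
  sumset (C ord0) (sumset_family (fun i => C (lift ord0 i))) \subset sumset_family C.
Proof.
apply/subsetP => z /imset2P[c w cC]; rewrite inE.
move=> /existsP[x /andP[/forallP xC /eqP ->]] ->; rewrite inE; apply/existsP.
exists [ffun i => if unlift ord0 i is Some j then x j else c]; apply/andP; split.
  by apply/forallP => i; rewrite ffunE; case: unliftP => [j ->|->].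
rewrite big_ord_recl ffunE unlift_none; apply/eqP; congr (_ + _).
by apply: eq_bigr => i _; rewrite ffunE liftK.
Qed.

Theorem cauchy_davenport_family n (C : 'I_n -> {set 'Z_p}) :
  (forall i, C i != set0) ->
  (minn p (\sum_(i < n) (#|C i| - 1) + 1) <= #|sumset_family C|)%N.
Proof.
elim: n => [|n IH] in C * => C_neq0.
  rewrite big_ord0 add0n; apply: leq_trans (geq_minr _ _) _.
  rewrite card_gt0; apply/set0Pn; exists 0; rewrite inE; apply/existsP.
  exists [ffun=> 0]; apply/andP; split; first by apply/forallP => -[].
  by rewrite big_ord0.
set tail := sumset_family (fun i => C (lift ord0 i)).
have IHtail := IH _ (fun i => C_neq0 (lift ord0 i)); rewrite -/tail in IHtail.
have tail_neq0 : tail != set0.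
  by rewrite -card_gt0; apply: leq_trans IHtail; rewrite leq_min addn1 prime_gt0.
have CD := cauchy_davenport (C_neq0 ord0) tail_neq0.
have head_gt0 : (0 < #|C ord0|)%N by rewrite card_gt0.
have := subset_leq_card (sumset_family_recl C); rewrite big_ord_recl.
move: IHtail CD head_gt0; move: (\sum_(i < n) _)%N #|tail| #|C ord0|.
by move: #|sumset _ _| #|sumset_family C| => ? ? ? ? ?; lia.
Qed.

End CauchyDavenport.

Lemma fiber_excess_ge (p k t : nat) (c : 'I_k -> nat) :
  (2 ^ t.+1 <= k - 1)%N -> (2 ^ t.+1 <= p)%N ->
  (forall i, p <= c i * 2 ^ t)%N -> (p <= \sum_(i < k) (c i - 1))%N.
Proof.
move=> k_large p_large c_large.
have excess_large i : (p <= (c i - 1) * 2 ^ t.+1)%N.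
  have := c_large i; move: p_large; rewrite expnS.
  by have := expn_gt0 2 t; move: (2 ^ t)%N (c i) => a b; nia.
have : (\sum_(i < k) p <= \sum_(i < k) (c i - 1) * 2 ^ t.+1)%N.
  by apply: leq_sum => i _; apply: excess_large.
rewrite sum_nat_const card_ord -big_distrl /=; move: k_large.
by have := expn_gt0 2 t.+1; move: (2 ^ t.+1)%N (\sum_(i < k) _)%N => a s; nia.
Qed.

Lemma run_eq_on_fibers p k t (P : protocol p k t) (m : 'I_k -> t.-tuple bool)
    (x y : 'I_k -> 'Z_p) :
  (forall i, msg P i (x i) = m i) -> (forall i, msg P i (y i) = m i) ->
  run P x = run P y.
Proof.
move=> xm ym; rewrite /run; congr (_ _).
by apply/ffunP => i; rewrite !ffunE xm ym.
Qed.

Theorem theorem3p4 (p k t : nat) :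
  prime p -> (1 < k)%N ->
  (2 ^ t.+1 <= k - 1)%N -> (2 ^ t.+1 <= p)%N ->
  forall g0 g1 : 'Z_p, g0 != g1 ->
  ~ exists P : protocol p k t, solves_sum_distinguish g0 g1 P.
Proof.
move=> p_prime _ k_large p_large g0 g1 _ [P solves].
have fiber i := exists_large_fiber (msg P i).
pose m i := xchoose (fiber i).
pose C i := [set z | msg P i z == m i].
have C_large i : (p <= #|C i| * 2 ^ t)%N.
  by rewrite -[X in (X <= _)%N](card_Zp_prime p_prime) (xchooseP (fiber i)).
have C_neq0 i : C i != set0.
  rewrite -card_gt0; have := C_large i; have := prime_gt0 p_prime.
  by case: #|C i| => //; rewrite mul0n; lia.
have sums_cover : sumset_family C = setT.
  apply/eqP; rewrite eqEcard subsetT cardsT (card_Zp_prime p_prime).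
  apply: leq_trans (cauchy_davenport_family p_prime C_neq0).
  by rewrite leq_min leqnn addn1 leqW // (fiber_excess_ge k_large p_large C_large).
have sum_in_fibers g : exists2 x : {ffun 'I_k -> 'Z_p},
    forall i, msg P i (x i) = m i & \sum_i x i = g.
  have : g \in sumset_family C by rewrite sums_cover inE.
  rewrite inE => /existsP[x /andP[/forallP xC /eqP ->]].
  by exists x => // i; apply/eqP; have := xC i; rewrite inE.
have [x0 x0m sum0] := sum_in_fibers g0.
have [x1 x1m sum1] := sum_in_fibers g1.
have := (solves x0).2 sum0; have := (solves x1).1 sum1.
by rewrite (run_eq_on_fibers x0m x1m) => ->.
Qed.
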